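(* Let $H=(V,E)$ be an unweighted hypergraph on $n$ vertices, and consider the algorithm Estimation$(H)$: compute a number $k>0$ with $\gamma_H(e)\ge k$ for all $e\in E$; set $H_0=H$ and $i=1$; while $H_{i-1}$ has edges, let $F_i=\textsc{WeakEdges}(H_{i-1},2^ik)$, set $\gamma'(e)=2^{i-1}k$ for every $e\in F_i$, set $H_i=H_{i-1}-F_i$ and increase $i$ by one. Here $\textsc{WeakEdges}(G,t)$ returns a set of edges of $G$ containing all $t$-weak edges of $G$. Let $c>0$. If $\textsc{WeakEdges}(G,t)$ outputs a $ct$-light set of edges of $G$ for every input $G,t$, then the output $\gamma'$ of Estimation$(H)$ satisfies $\sum_{e\in E}\frac{1}{\gamma'(e)}\le 2c(n-1)$.
   Context: A hypergraph $H=(V,E)$ has edges that are subsets of $V$. For $U\subseteq V$, $H[U]=(U,\{e\in E:e\subseteq U\})$; for $A\subseteq V$, $\delta_H(A)$ is the set of edges meeting both $A$ and $V\setminus A$; $\lambda(H)=\min_{\emptyset\subsetneq A\subsetneq V}|\delta_H(A)|$. The strength of $e$ is $\gamma_H(e)=\max_{e\subseteq U\subseteq V}\lambda(H[U])$; an edge is $t$-weak in $G$ if its strength in $G$ is less than $t$. $\kappa(G)$ is the number of connected components of $G$. A set $E'\subseteq E(G)$ is $\ell$-light if $|E'|\le\ell(\kappa(G-E')-\kappa(G))$. *)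

From HB Require Import structures.
From mathcomp Require Import all_boot all_order all_algebra.
Set Implicit Arguments. Unset Strict Implicit. Unset Printing Implicit Defensive.
Import Order.TTheory GRing.Theory Num.Theory.
Local Open Scope ring_scope.

(* A hypergraph on the finite vertex type V: edges are indexed by the finite
   type E, edge e has vertex set ends e.  A (sub)hypergraph with the same
   vertex set is given by its edge set G : {set E}. *)
Section Hyper.
Variables (V E : finType) (ends : E -> {set V}).

Definition induced_edges (G : {set E}) (U : {set V}) : {set E} :=
  [set e in G | ends e \subset U].

Definition cut (G : {set E}) (A : {set V}) : {set E} :=
  [set e in G | (ends e :&: A != set0) && (ends e :\: A != set0)].

(* lambda(G[U]) >= t   (min over all A with  emptyset < A < U;
   empty minimum = +infinity) *)
Definition lambda_ge (R : numDomainType) (G : {set E}) (U : {set V}) (t : R) : Prop :=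
  forall A : {set V}, set0 \proper A -> A \proper U ->
    t <= (#|cut (induced_edges G U) A|)%:R.

(* gamma_G(e) >= t  (max over U containing e of lambda(G[U])) *)
Definition strength_ge (R : numDomainType) (G : {set E}) (e : E) (t : R) : Prop :=
  exists U : {set V}, ends e \subset U /\ lambda_ge G U t.

Definition weak (R : numDomainType) (G : {set E}) (t : R) (e : E) : Prop :=
  e \in G /\ ~ strength_ge G e t.

Definition adj (G : {set E}) : rel V :=
  fun x y => [exists e in G, (x \in ends e) && (y \in ends e)].

Definition kappa (G : {set E}) : nat := n_comp (adj G) predT.

Definition light (R : numDomainType) (l : R) (G Es : {set E}) : Prop :=
  Es \subset G /\
  (#|Es|%:R <= l * ((kappa (G :\: Es))%:R - (kappa G)%:R)).

(* The edge sets H_i of the algorithm Estimation, given the WeakEdges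
   procedure WE : (graph, threshold) -> edge set:
   H_0 = H,  H_i = H_{i-1} - F_i,  F_i = WE (H_{i-1}) (2^i k). *)
Fixpoint est_run (R : numDomainType) (WE : {set E} -> R -> {set E}) (k : R)
    (i : nat) : {set E} :=
  match i with
  | 0 => [set: E]
  | i'.+1 => est_run WE k i' :\: WE (est_run WE k i') (2%:R ^+ i * k)
  end.

(* F_i for i >= 1 *)
Definition est_F (R : numDomainType) (WE : {set E} -> R -> {set E}) (k : R)
    (i : nat) : {set E} :=
  WE (est_run WE k i.-1) (2%:R ^+ i * k).

End Hyper.

(* Each F_i is (c 2^i k)-light in H_(i-1) and its edges receive gamma' = 2^(i-1) k,
   so their total weight sum 1/gamma' is at most 2c times the number of components
   created by removing F_i.  Summing over the rounds telescopes to 2c times the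
   growth of kappa from H_0 = H to the edgeless H_m, which is at most n - 1. *)
From HB Require Import structures.
From mathcomp Require Import all_boot all_order all_algebra.
Set Implicit Arguments. Unset Strict Implicit. Unset Printing Implicit Defensive.
Import Order.TTheory GRing.Theory Num.Theory.
Local Open Scope ring_scope.

Section Components.
Variables (V E : finType) (ends : E -> {set V}).

Lemma adj_sym (G : {set E}) : symmetric (adj ends G).
Proof.
by move=> x y; apply/existsP/existsP => -[e /andP[eG /andP[xe ye]]];
  exists e; rewrite eG xe ye.
Qed.

Lemma kappa_le_card (G : {set E}) : (kappa ends G <= #|V|)%N.
Proof. exact: max_card. Qed.

Lemma kappa_gt0 (G : {set E}) (x : V) : (0 < kappa ends G)%N.
Proof.
apply/card_gt0P; exists (fingraph.root (adj ends G) x).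
by rewrite inE /= andbT roots_root //; apply/sym_connect_sym/adj_sym.
Qed.

Lemma kappa_growth_le (R : numDomainType) (G G' : {set E}) :
  (kappa ends G')%:R - (kappa ends G)%:R <= (#|V| - 1)%:R :> R.
Proof.
rewrite lerBlDr -natrD ler_nat (leq_trans (kappa_le_card G')) //.
have [x _ | V0] := pickP (@predT V); last by rewrite (eq_card0 V0).
by rewrite -leq_subLR subKn ?(kappa_gt0 G x) //; apply/card_gt0P; exists x.
Qed.

Lemma light_sum_inv_le (R : realFieldType) (c s : R) (w : E -> R) (G F : {set E}) :
  0 < s -> light ends (c * (2%:R * s)) G F -> {in F, forall e, w e = s} ->
  \sum_(e in F) (w e)^-1 <=
    2%:R * c * ((kappa ends (G :\: F))%:R - (kappa ends G)%:R).
Proof.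
move=> s_gt0 [_ F_light] wF.
rewrite (eq_bigr (fun=> s^-1)) => [|e /wF -> //].
rewrite sumr_const -[_ *+ #|F|]mulr_natl ler_pdivrMr //.
by apply: (le_trans F_light); rewrite mulrA (mulrC c) mulrAC.
Qed.

End Components.

Section Estimation.
Variables (R : realFieldType) (V E : finType) (ends : E -> {set V}).
Variables (c k : R) (WE : {set E} -> R -> {set E}) (gamma' : E -> R).
Hypothesis k_gt0 : 0 < k.
Hypothesis WE_sub : forall (G : {set E}) (t : R), WE G t \subset G.
Hypothesis WE_light : forall (G : {set E}) (t : R), light ends (c * t) G (WE G t).
Hypothesis gamma'_F : forall (i : nat) (e : E), (1 <= i)%N -> e \in est_F WE k i ->
  gamma' e = 2%:R ^+ i.-1 * k.

Lemma removed_est_run_succ (j : nat) :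
  ~: est_run WE k j.+1 =i [predU ~: est_run WE k j & est_F WE k j.+1].
Proof.
move=> e; rewrite /est_F /= !inE negb_and negbK orbC.
by case eF: (e \in _) => //; rewrite (subsetP (WE_sub _ _) e eF).
Qed.

Lemma sum_inv_removed_le (j : nat) :
  \sum_(e in ~: est_run WE k j) (gamma' e)^-1 <=
    2%:R * c * ((kappa ends (est_run WE k j))%:R - (kappa ends [set: E])%:R).
Proof.
elim: j => [|j IH]; first by rewrite setCT big_set0 subrr mulr0.
rewrite (eq_bigl _ _ (removed_est_run_succ j)) bigU /=; last first.
  by rewrite disjoint_sym disjoints_subset setCK WE_sub.
have s_gt0 : 0 < 2%:R ^+ j * k :> R by rewrite mulr_gt0 ?exprn_gt0.
have F_light : light ends (c * (2%:R * (2%:R ^+ j * k)))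
    (est_run WE k j) (est_F WE k j.+1).
  by rewrite [2%:R * _]mulrA -exprS; apply: WE_light.
have := light_sum_inv_le s_gt0 F_light (fun e eF => gamma'_F (ltn0Sn j) eF).
move=> /(lerD IH) /le_trans; apply.
by rewrite -mulrDr addrC addrA subrK.
Qed.

End Estimation.

Theorem lemma3p2 (R : realFieldType) (V E : finType) (ends : E -> {set V})
    (c k : R) (WE : {set E} -> R -> {set E}) (gamma' : E -> R) (m : nat) :
  0 < c ->
  0 < k ->
  (* k is a lower bound on all edge strengths of H *)
  (forall e : E, strength_ge ends [set: E] e k) ->
  (* WeakEdges(G,t) returns a set of edges of G containing all t-weak edges *)
  (forall (G : {set E}) (t : R), WE G t \subset G) ->
  (forall (G : {set E}) (t : R) (e : E), weak ends G t e -> e \in WE G t) ->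
  (* ... and this set is (c t)-light in G *)
  (forall (G : {set E}) (t : R), light ends (c * t) G (WE G t)) ->
  (* the while loop terminates: H_m has no edges *)
  est_run WE k m = set0 ->
  (* gamma' is the output: gamma'(e) = 2^(i-1) k for every e in F_i *)
  (forall (i : nat) (e : E), (1 <= i)%N -> e \in est_F WE k i ->
     gamma' e = 2%:R ^+ i.-1 * k) ->
  \sum_(e : E) (gamma' e)^-1 <= 2%:R * c * (#|V| - 1)%:R.
Proof.
move=> c_gt0 k_gt0 _ WE_sub _ WE_light H_m_empty gamma'_F.
have := sum_inv_removed_le k_gt0 WE_sub WE_light gamma'_F m.
rewrite H_m_empty setC0 (eq_bigl predT) => [|e]; last by rewrite inE.
move/le_trans; apply; apply: ler_wpM2l; first by rewrite mulr_ge0 // ltW.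
exact: kappa_growth_le.
Qed.
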